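(* Let $\sigma$ be a permutation of length $m$ with exactly one descent and exactly $i$ adjacency pairs, and let $\pi\in\{M_n,W_n\}$ have exactly one descent, with $\sigma\le\pi$. Then $$\mu(\sigma,\pi)=(-1)^{n-m}\binom{\lfloor (n+m-i-a)/2\rfloor}{m},$$ where $a=0$ if $\sigma$ and $\pi$ are related and $a=1$ otherwise.
   Context: A permutation of length $n$ is an arrangement of $1,\dots,n$. The permutation poset is ordered by pattern containment: $\sigma\le\pi$ if $\pi$ has a subsequence in the same relative order as $\sigma$. $\mu$ is its Möbius function: $\mu(a,a)=1$, $\mu(a,b)=-\sum_{a\le z<b}\mu(a,z)$ for $a<b$, $\mu(a,b)=0$ if $a\not\le b$. A descent is an index $d$ with $\pi_d>\pi_{d+1}$. An adjacency pair is an index $j$ with $\sigma_{j+1}=\sigma_j+1$; the number of adjacency pairs is the number of such indices. $M_n$ lists the even numbers $2,4,\dots\le n$ increasingly followed by the odd numbers $1,3,\dots\le n$ increasingly (e.g. $M_6=246135$); $W_n$ lists the odd numbers increasingly followed by the even numbers increasingly (e.g. $W_5=13524$). Two permutations with exactly one descent are related if the letter $1$ lies on the same side of the descent in both (i.e. in both it is before the descent, or in both it is after the descent). *)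

From mathcomp Require Import all_boot all_order all_algebra.
Set Implicit Arguments. Unset Strict Implicit. Unset Printing Implicit Defensive.
Import GRing.Theory.

Definition is_perm (s : seq nat) : bool := perm_eq s (iota 1 (size s)).

Definition std (s : seq nat) : seq nat :=
  [seq (count (fun y => y < x) s).+1 | x <- s].

Definition contains (sigma pi : seq nat) : bool :=
  [exists t : (size pi).-tuple bool, std (mask t pi) == sigma].

Definition perms_upto (k : nat) : seq (seq nat) :=
  flatten [seq permutations (iota 1 j) | j <- iota 0 k.+1].

Fixpoint mu_rec (fuel : nat) (a b : seq nat) : int :=
  if a == b then 1%R
  else if ~~ contains a b then 0%R
  else match fuel with
       | 0 => 0%R
       | f.+1 => (- \sum_(z <- perms_upto (size b)
                      | [&& contains a z, contains z b & z != b]) mu_rec f a z)%R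
       end.

Definition mu (a b : seq nat) : int := mu_rec (size b).+1 a b.

(* descents: 0-based indices d with s_d > s_{d+1} *)
Definition is_descent (s : seq nat) (d : nat) : bool := nth 0 s d > nth 0 s d.+1.
Definition des (s : seq nat) : nat := count (is_descent s) (iota 0 (size s).-1).
Definition first_descent (s : seq nat) : nat := find (is_descent s) (iota 0 (size s).-1).

Definition adj (s : seq nat) : nat :=
  count (fun j => nth 0 s j.+1 == (nth 0 s j).+1) (iota 0 (size s).-1).

Definition M_perm (n : nat) : seq nat :=
  [seq x <- iota 1 n | ~~ odd x] ++ [seq x <- iota 1 n | odd x].
Definition W_perm (n : nat) : seq nat :=
  [seq x <- iota 1 n | odd x] ++ [seq x <- iota 1 n | ~~ odd x].

Definition one_before_descent (s : seq nat) : bool := index 1 s <= first_descent s.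

Definition related (s t : seq nat) : bool :=
  one_before_descent s == one_before_descent t.

From mathcomp Require Import all_boot all_order all_algebra zify.
Import GRing.Theory.

(* A boolean word [w] encodes the permutation [word_perm w] listing the positions
   of its letters [true] increasingly, followed by the positions of its letters
   [false]; [M_n] and [W_n] encode the two alternating words of length [n].  The
   patterns of [word_perm w] are the encodings of the subwords of [w], and on words
   with a letter [false] before a letter [true] (exactly those encoded by
   permutations with one descent) the encoding is injective and turns pattern
   containment into the subword order, adjacency pairs into equal neighbouring
   letters, and the side of the descent holding the letter 1 into the first letter.
   So [sigma <= pi] becomes an interval [u <= A] of the subword order with [A]
   alternating.  On it, [z |-> (-1)^(n - |z|) * #(embeddings of z into A)]
   satisfies the dual Moebius recursion, because the signed number of subwords of
   an alternating word containing [x] vanishes unless [x] is the whole word; hence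
   [mu(u, A)] is its value at [u], and the embeddings of a word into an
   alternating word are counted by the binomial coefficient, by induction. *)

Set Implicit Arguments.
Unset Strict Implicit.
Unset Printing Implicit Defensive.

Lemma index_iota_mem m n x : x \in iota m n -> index x (iota m n) = x - m.
Proof.
move=> hx; have := nth_index 0 hx; rewrite nth_iota; first lia.
by rewrite -[X in _ < X](size_iota m n) index_mem.
Qed.

Lemma count_lt_sorted (L : seq nat) x : sorted ltn L -> x \in L ->
  count (fun y => y < x) L = index x L.
Proof.
elim: L => [//|y L IH] /= hs.
have hall := order_path_min ltn_trans hs.
rewrite inE; case: eqP => [-> _|/eqP hne hx].
  rewrite ltnn eqxx /=; apply/eqP; rewrite -leqn0 leqNgt -has_count.
  apply/hasPn => z hz; rewrite -leqNgt ltnW //; exact: (allP hall).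
rewrite eq_sym (negbTE hne) (allP hall x hx) IH //.
exact: path_sorted hs.
Qed.

Definition rank (s : seq nat) (x : nat) : nat := (count (fun y => y < x) s).+1.

Lemma rank_lt s : {in s &, forall x y, (rank s x < rank s y) = (x < y)}.
Proof.
move=> x y hx _; rewrite /rank ltnS.
case: (ltnP x y) => hxy.
- have hle : count (fun z => z < x.+1) s <= count (fun z => z < y) s.
    by apply: sub_count => z /= hz; lia.
  have hsplit : count (fun z => z < x.+1) s = count (pred1 x) s + count (fun z => z < x) s.
    rewrite -count_predUI (@eq_count _ (predI _ _) pred0) ?count_pred0 ?addn0;
      last by move=> z /=; case: eqP => // ->; rewrite ltnn.
    by apply: eq_count => z /=; rewrite ltnS leq_eqVlt.
  have hx1 : 0 < count (pred1 x) s by rewrite -has_count has_pred1.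
  lia.
- by apply/negbTE; rewrite -leqNgt; apply: sub_count => z /= hz; lia.
Qed.

Lemma std_map_mono (f : nat -> nat) s :
  {in s &, forall x y, (f x < f y) = (x < y)} -> std (map f s) = std s.
Proof.
move=> hf; rewrite /std -map_comp; apply/eq_in_map => x hx /=.
by rewrite count_map; congr S; apply: eq_in_count => y hy /=; rewrite hf.
Qed.

Lemma contains_trans a b c : contains a b -> contains b c -> contains a c.
Proof.
case/existsP => t /eqP <-; move: (tval t) => {}t.
case/existsP => t' /eqP <-.
set s := mask t' c.
have -> : mask t (std s) = map (rank s) (mask t s) by rewrite /std map_mask.
rewrite std_map_mono; last first.
  by apply: sub_in2 (@rank_lt s) => x; apply: mem_mask.
have /subseqP[m hm ->] := subseq_trans (mask_subseq t s) (mask_subseq t' c).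
apply/existsP; exists (Tuple (introT eqP hm)); exact: eqxx.
Qed.

Lemma std_perm b : is_perm b -> std b = b.
Proof.
move=> hb; rewrite /std -[in RHS](map_id b); apply/eq_in_map => x hx.
have hx' : x \in iota 1 (size b) by rewrite -(perm_mem hb).
rewrite (permP hb) count_lt_sorted ?iota_ltn_sorted // index_iota_mem //.
by move: hx'; rewrite mem_iota; lia.
Qed.

Lemma contains_refl b : is_perm b -> contains b b.
Proof.
move=> hb; apply/existsP; exists [tuple of nseq (size b) true].
by rewrite /= mask_true // std_perm.
Qed.

Lemma contains_size z b : contains z b -> size z <= size b.
Proof.
case/existsP => t /eqP <-.
by rewrite /std size_map size_mask ?size_tuple // -[X in _ <= X](size_tuple t) count_size.
Qed.

Lemma contains_size_eq z b : is_perm b -> contains z b -> size z = size b -> z = b.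
Proof.
move=> hb /existsP[t /eqP <-]; rewrite /std size_map => hs.
have [_] := size_subseq_leqif (mask_subseq t b).
by rewrite hs eqxx => /esym/eqP ->; exact: std_perm.
Qed.

Lemma mem_perms_upto y k : (y \in perms_upto k) = is_perm y && (size y <= k).
Proof.
apply/flatten_mapP/andP => [[j] | [hy hk]].
  rewrite mem_iota mem_permutations => /andP[_ hj] hyj.
  by rewrite /is_perm (perm_size hyj) size_iota -ltnS.
by exists (size y); rewrite ?mem_iota ?mem_permutations.
Qed.

Lemma uniq_perms_upto k : uniq (perms_upto k).
Proof.
elim: k => [//|k IH].
have -> : perms_upto k.+1 = perms_upto k ++ permutations (iota 1 k.+1).
  by rewrite /perms_upto -[k.+2]addn1 iotaD map_cat flatten_cat /= cats0.
rewrite cat_uniq IH permutations_uniq andbT; apply/hasPn => y.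
rewrite mem_permutations => /perm_size hy.
by rewrite mem_perms_upto hy size_iota ltnn andbF.
Qed.

Lemma big_perms_upto_widen (R : Type) (idx : R) (op : Monoid.com_law idx)
    (P : pred (seq nat)) (F : seq nat -> R) k n :
  k <= n -> (forall y, P y -> size y <= k) ->
  \big[op/idx]_(y <- perms_upto n | P y) F y = \big[op/idx]_(y <- perms_upto k | P y) F y.
Proof.
move=> hkn hP; rewrite -big_filter -[RHS]big_filter; apply: perm_big.
apply: uniq_perm; rewrite ?filter_uniq ?uniq_perms_upto // => y.
rewrite !mem_filter !mem_perms_upto.
by case hy : (P y) => //=; rewrite hP // (leq_trans (hP y hy) hkn).
Qed.

Lemma mu_recS f a b : mu_rec f.+1 a b =
  if a == b then 1%R
  else if ~~ contains a b then 0%R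
  else (- \sum_(z <- perms_upto (size b) | [&& contains a z, contains z b & z != b])
          mu_rec f a z)%R.
Proof. by []. Qed.

Lemma contains_size_lt z b : is_perm b -> contains z b -> z != b -> size z < size b.
Proof.
move=> hb hzb hne; rewrite ltn_neqAle contains_size // andbT.
by apply: contraNneq hne => hs; rewrite (contains_size_eq hb hzb hs).
Qed.

(* The recursion of [mu_rec] only visits patterns strictly below [b], so any
   fuel larger than [size b] gives the same value. *)
Lemma mu_rec_fuel f a b : is_perm b -> size b < f -> mu_rec f a b = mu a b.
Proof.
have [N] := ubnP (size b); elim: N f b => // N IH [//|f] b hN hb hf.
rewrite /mu !mu_recS; case: ifP => // _; case: ifP => // _; congr (- _)%R.
rewrite big_seq_cond [RHS]big_seq_cond; apply: eq_bigr => z /and4P[hz _ hzb hne].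
have /andP[pz _] : is_perm z && (size z <= size b) by rewrite -mem_perms_upto.
have hzs := contains_size_lt hb hzb hne.
by rewrite !IH //; lia.
Qed.

Lemma mu_sum_below a b : is_perm b -> contains a b ->
  (\sum_(z <- perms_upto (size b) | contains a z && contains z b) mu a z = (a == b)%:R)%R.
Proof.
move=> hb hab.
have hbI : b \in [seq z <- perms_upto (size b) | contains a z && contains z b].
  by rewrite mem_filter hab contains_refl // mem_perms_upto hb leqnn.
rewrite -big_filter (bigD1_seq b) ?filter_uniq ?uniq_perms_upto // big_filter_cond.
have [eab|hne] := eqVneq a b.
  subst a; rewrite big1 ?addr0; first by rewrite /mu mu_recS eqxx.
  move=> z /andP[/andP[hbz hzb] hzn]; case/negP: hzn; apply/eqP.
  have hs : size z = size b.
    by apply/eqP; rewrite eqn_leq !contains_size.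
  exact: contains_size_eq hb hzb hs.
rewrite /mu mu_recS (negbTE hne) hab /= addrC; apply/eqP; rewrite subr_eq0.
apply/eqP; rewrite [in RHS]big_seq_cond [in LHS]big_seq_cond.
apply: eq_big => [z|z /andP[hz /andP[/andP[_ hzb] hzn]]]; first by rewrite -!andbA.
have /andP[pz _] : is_perm z && (size z <= size b) by rewrite -mem_perms_upto.
by rewrite mu_rec_fuel // contains_size_lt.
Qed.

Definition perm_interval (a c : seq nat) : seq (seq nat) :=
  [seq z <- perms_upto (size c) | contains a z && contains z c].

Lemma uniq_perm_interval a c : uniq (perm_interval a c).
Proof. exact/filter_uniq/uniq_perms_upto. Qed.

Lemma mu_sum_interval a c z : z \in perm_interval a c ->
  (\sum_(y <- perm_interval a c | contains y z) mu a y = (z == a)%:R)%R.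
Proof.
rewrite mem_filter mem_perms_upto => /andP[/andP[haz hzc] /andP[pz hzsize]].
rewrite big_filter_cond eq_sym -(mu_sum_below pz haz).
rewrite (big_perms_upto_widen _ _ hzsize); last first.
  by move=> y /andP[_ hyz]; exact: contains_size.
apply: eq_bigl => y; rewrite -andbA; case: (contains a y) => //=.
case hyz : (contains y z); last by rewrite andbF.
by rewrite (contains_trans hyz hzc).
Qed.

(* If [f] satisfies the Moebius recursion from [s] downwards and [g] the dual
   recursion from [t] upwards on the same finite poset, then [f t = g s]:
   both equal [\sum_(s <= y <= z <= t) f y * g z]. *)
Lemma recursions_agree (R : pzRingType) (T : eqType) (J : seq T) (le : rel T)
    (f g : T -> R) s t :
  uniq J -> s \in J -> t \in J ->
  (forall z, z \in J -> \sum_(y <- J | le y z) f y = (z == s)%:R)%R ->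
  (forall x, x \in J -> \sum_(z <- J | le x z) g z = (x == t)%:R)%R ->
  f t = g s.
Proof.
move=> hu hs ht hf hg.
have pick_r (h : T -> R) u : u \in J -> (\sum_(y <- J) h y * (y == u)%:R = h u)%R.
  move=> hJ; rewrite (bigD1_seq u) //= eqxx mulr1 big1 ?addr0 // => y /negbTE ->.
  exact: mulr0.
have pick_l (h : T -> R) u : u \in J -> (\sum_(y <- J) (y == u)%:R * h y = h u)%R.
  move=> hJ; rewrite (bigD1_seq u) //= eqxx mul1r big1 ?addr0 // => y /negbTE ->.
  exact: mul0r.
rewrite -(pick_r f t ht) -(pick_l g s hs).
transitivity (\sum_(y <- J) \sum_(z <- J) if le y z then f y * g z else 0)%R.
  rewrite [LHS]big_seq [RHS]big_seq; apply: eq_bigr => y hy.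
  by rewrite -hg // mulr_sumr big_mkcond.
rewrite exchange_big /= [LHS]big_seq [RHS]big_seq; apply: eq_bigr => z hz.
by rewrite -hf // mulr_suml [RHS]big_mkcond.
Qed.

Definition letter (w : seq bool) (j : nat) : bool := nth false w j.-1.

Definition split_by (p : pred nat) (L : seq nat) : seq nat :=
  filter p L ++ filter (predC p) L.

Definition word_perm (w : seq bool) : seq nat := split_by (letter w) (iota 1 (size w)).

Lemma map_letter w : map (letter w) (iota 1 (size w)) = w.
Proof.
apply: (@eq_from_nth _ false); first by rewrite size_map size_iota.
move=> j; rewrite size_map size_iota => hj.
by rewrite (nth_map 0) ?size_iota // nth_iota.
Qed.

Lemma perm_split_by p L : perm_eq (split_by p L) L.
Proof. by rewrite /split_by perm_filterC. Qed.

Lemma size_word_perm w : size (word_perm w) = size w.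
Proof. by rewrite (perm_size (perm_split_by _ _)) size_iota. Qed.

Lemma is_perm_word_perm w : is_perm (word_perm w).
Proof. by rewrite /is_perm size_word_perm perm_split_by. Qed.

Lemma uniq_word_perm w : uniq (word_perm w).
Proof. by rewrite (perm_uniq (perm_split_by _ _)) iota_uniq. Qed.

Lemma map_index_uniq (L : seq nat) : uniq L ->
  map (fun x => index x L) L = iota 0 (size L).
Proof.
elim: L => [//|y L IH] /= /andP[hy hu]; rewrite eqxx; congr (_ :: _).
rewrite -(addn0 1) iotaDl -IH // -map_comp; apply/eq_in_map => x hx /=.
by case: (y =P x) => // exy; rewrite exy hx in hy.
Qed.

Lemma std_split_by p L : sorted ltn L -> std (split_by p L) = word_perm (map p L).
Proof.
move=> hs; have hu : uniq L by move: hs; rewrite ltn_sorted_uniq_leq => /andP[].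
set f := fun x => (index x L).+1.
have -> : std (split_by p L) = map f (split_by p L).
  apply/eq_in_map => x hx.
  rewrite (permP (perm_split_by p L)) count_lt_sorted //.
  by rewrite -(perm_mem (perm_split_by p L)).
have hiota : iota 1 (size (map p L)) = map f L.
  rewrite size_map /f -(addn0 1) iotaDl -map_index_uniq // -map_comp.
  exact: eq_map.
rewrite /word_perm hiota /split_by map_cat !filter_map; congr (_ ++ _); congr map;
  apply: eq_in_filter => x hx; rewrite /letter /f /= (nth_map 0) ?index_mem //;
  by rewrite nth_index.
Qed.

Lemma filter_split_by V p L : filter V (split_by p L) = split_by p (filter V L).
Proof.
rewrite /split_by filter_cat -!filter_predI; congr (_ ++ _); apply: eq_filter => x /=;
  by rewrite andbC.
Qed.

Lemma std_filter_word_perm w V :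
  std (filter V (word_perm w)) = word_perm (mask (map V (iota 1 (size w))) w).
Proof.
rewrite /word_perm filter_split_by std_split_by; last first.
  apply: sorted_filter; [exact: ltn_trans | exact: iota_ltn_sorted].
by rewrite filter_mask map_mask map_letter.
Qed.

Lemma contains_word_perm z w : contains z (word_perm w) ->
  exists2 m, size m = size w & z = word_perm (mask m w).
Proof.
case/existsP => t /eqP <-.
have /(subseq_uniqP (uniq_word_perm w)) -> := mask_subseq t (word_perm w).
exists (map (fun x => x \in mask t (word_perm w)) (iota 1 (size w))).
  by rewrite size_map size_iota.
by rewrite std_filter_word_perm.
Qed.

Lemma subseq_contains_word_perm u w : subseq u w -> contains (word_perm u) (word_perm w).
Proof.
case/subseqP => m hm ->; apply/existsP.
have hs : size (map (letter m) (word_perm w)) == size (word_perm w) by rewrite size_map.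
exists (Tuple hs) => /=.
by rewrite -filter_mask std_filter_word_perm -hm map_letter.
Qed.

Definition has_rise (u : seq bool) : bool := subseq [:: false; true] u.

Definition true_positions (u : seq bool) := filter (letter u) (iota 1 (size u)).
Definition false_positions (u : seq bool) := filter (predC (letter u)) (iota 1 (size u)).

Lemma size_true_positions u : size (true_positions u) = count id u.
Proof. by rewrite size_filter -[in RHS](map_letter u) count_map. Qed.

Lemma size_false_positions u : size (false_positions u) = size u - count id u.
Proof.
have := size_word_perm u; rewrite /word_perm /split_by size_cat.
by rewrite -/(true_positions u) -/(false_positions u) size_true_positions; lia.
Qed.

Lemma sorted_true_positions u : sorted ltn (true_positions u).
Proof. apply: sorted_filter; [exact: ltn_trans | exact: iota_ltn_sorted]. Qed.

Lemma sorted_false_positions u : sorted ltn (false_positions u).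
Proof. apply: sorted_filter; [exact: ltn_trans | exact: iota_ltn_sorted]. Qed.

Lemma sorted_head_le s y : sorted ltn s -> y \in s -> head 0 s <= y.
Proof.
case: s => [//|x s] /= hs; rewrite inE => /orP[/eqP -> //|hy].
by have /allP/(_ y hy)/ltnW := order_path_min ltn_trans hs.
Qed.

Lemma sorted_last_ge s y : sorted ltn s -> y \in s -> y <= last 0 s.
Proof.
case: s => [//|x s] /=; elim: s x y => [|z s IH] x y /=; first by rewrite inE => _ /eqP ->.
move=> /andP[hxz hp]; rewrite inE => /orP[/eqP ->|hy]; last exact: IH.
exact: leq_trans (ltnW hxz) (IH z z hp (mem_head _ _)).
Qed.

Lemma has_rise_witness u : has_rise u -> exists j j',
  [/\ j < j', j' < size u, nth false u j = false & nth false u j' = true].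
Proof.
elim: u => [//|[] u IH]; rewrite /has_rise /=.
  by case/IH => j [j' [h1 h2 h3 h4]]; exists j.+1, j'.+1.
rewrite sub1seq => ht; exists 0, (index true u).+1; split => //=.
  by rewrite ltnS index_mem.
by rewrite nth_index.
Qed.

Lemma no_rise_shape u : ~~ has_rise u ->
  u = nseq (count id u) true ++ nseq (size u - count id u) false.
Proof.
elim: u => [//|[] u IH]; rewrite /has_rise /= => hn.
  by rewrite {1}(IH hn) subSS.
rewrite sub1seq in hn.
have /all_pred1P hu : all (pred1 false) u.
  by apply/allP => -[] // hx; rewrite hx in hn.
have -> : count id u = 0 by rewrite hu count_nseq.
by rewrite subn0 /= {1}hu.
Qed.

Lemma word_perm_nseq k l : word_perm (nseq k true ++ nseq l false) = iota 1 (k + l).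
Proof.
set w := nseq k true ++ nseq l false.
rewrite /word_perm /split_by size_cat !size_nseq iotaD !filter_cat.
have hletter j : 0 < j <= k + l -> letter w j = (j <= k).
  case: j => [//|j] /andP[_ hj]; rewrite /letter /= nth_cat size_nseq nth_nseq.
  by case: ifP => hjk; rewrite ?hjk // nth_nseq; case: ifP => //; lia.
rewrite (@eq_in_filter _ (letter w) predT (iota 1 k)); last first.
  by move=> j; rewrite mem_iota /= => hj; rewrite hletter; lia.
rewrite (@eq_in_filter _ (letter w) pred0 (iota (1 + k) l)); last first.
  by move=> j; rewrite mem_iota /= => hj; rewrite hletter; lia.
rewrite (@eq_in_filter _ (predC (letter w)) pred0 (iota 1 k)); last first.
  by move=> j; rewrite mem_iota /= => hj; rewrite hletter; lia.
rewrite (@eq_in_filter _ (predC (letter w)) predT (iota (1 + k) l)); last first.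
  by move=> j; rewrite mem_iota /= => hj; rewrite hletter; lia.
by rewrite !filter_pred0 !filter_predT cats0.
Qed.

Lemma des_iota k n : des (iota k n) = 0.
Proof.
apply/eqP; rewrite -leqn0 leqNgt -has_count; apply/hasPn => j.
by rewrite size_iota mem_iota /is_descent => hj; rewrite !nth_iota; lia.
Qed.

Lemma des_word_perm_no_rise u : ~~ has_rise u -> des (word_perm u) = 0.
Proof. by move/no_rise_shape => ->; rewrite word_perm_nseq des_iota. Qed.

Lemma rise_blocks u : has_rise u ->
  [/\ 0 < count id u, count id u < size u &
      head 0 (false_positions u) < last 0 (true_positions u)].
Proof.
case/has_rise_witness => j [j' [hjj' hj' hj hj'T]].
have hT : j'.+1 \in true_positions u by rewrite mem_filter /letter /= hj'T mem_iota; lia.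
have hF : j.+1 \in false_positions u by rewrite mem_filter /letter /= hj mem_iota; lia.
have := sorted_head_le (sorted_false_positions u) hF.
have := sorted_last_ge (sorted_true_positions u) hT.
have : 0 < size (true_positions u) by case: (true_positions u) hT.
have : 0 < size (false_positions u) by case: (false_positions u) hF.
rewrite size_true_positions size_false_positions; split; lia.
Qed.

Lemma is_descent_word_perm u i : has_rise u -> i < size u - 1 ->
  is_descent (word_perm u) i = (i == (count id u).-1).
Proof.
move=> hw hi; have [h1 h2 h3] := rise_blocks hw.
have hT := size_true_positions u; have hF := size_false_positions u.
rewrite /is_descent /word_perm /split_by -/(true_positions u) -/(false_positions u).
rewrite !nth_cat hT.
case: (ltngtP i (count id u).-1) => hic.
- rewrite ifT; last lia. rewrite ifT; last lia.
  apply/negbTE; rewrite -leqNgt ltnW //.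
  by apply: (sorted_ltn_nth ltn_trans); rewrite ?inE ?hT ?sorted_true_positions //; lia.
- rewrite ifF; last lia. rewrite ifF; last lia.
  apply/negbTE; rewrite -leqNgt ltnW // (_ : i.+1 - count id u = (i - count id u).+1);
    last lia.
  by apply: (sorted_ltn_nth ltn_trans); rewrite ?inE ?hF ?sorted_false_positions //; lia.
- rewrite ifF; last lia. rewrite ifT; last lia.
  rewrite hic (_ : (count id u).-1.+1 - count id u = 0); last lia.
  by rewrite -hT nth_last nth0 h3.
Qed.

Lemma des_word_perm u : has_rise u -> des (word_perm u) = 1.
Proof.
move=> hw; have [h1 h2 _] := rise_blocks hw.
rewrite /des size_word_perm.
transitivity (count (pred1 (count id u).-1) (iota 0 (size u).-1)).
  by apply: eq_in_count => i; rewrite mem_iota => hi; rewrite is_descent_word_perm //; lia.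
rewrite (count_uniq_mem _ (iota_uniq 0 _)) (_ : _ \in _ = true) //.
by rewrite mem_iota; lia.
Qed.

Lemma first_descent_word_perm u : has_rise u ->
  first_descent (word_perm u) = (count id u).-1.
Proof.
move=> hw; have [h1 h2 _] := rise_blocks hw.
rewrite /first_descent size_word_perm.
rewrite (@eq_in_find _ _ (pred1 (count id u).-1)) -/(index _ _) ?index_iota_mem //.
- by rewrite subn0.
- by rewrite mem_iota; lia.
- by move=> i; rewrite mem_iota => hi; rewrite is_descent_word_perm //; lia.
Qed.

Lemma word_perm_inj u u' : has_rise u -> word_perm u = word_perm u' -> u = u'.
Proof.
move=> hw he.
have hsz : size u = size u' by rewrite -size_word_perm he size_word_perm.
have [h1 h2 _] := rise_blocks hw.
have hw' : has_rise u'.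
  by apply: contraT => /des_word_perm_no_rise; rewrite -he des_word_perm.
have hc : count id u = count id u'.
  have [h1' _ _] := rise_blocks hw'.
  by have := first_descent_word_perm hw; rewrite he first_descent_word_perm //; lia.
have hT : true_positions u = true_positions u'.
  have := congr1 (take (count id u)) he; rewrite /word_perm /split_by.
  by rewrite !take_size_cat ?size_true_positions // hc.
rewrite -[u](map_letter u) -[u'](map_letter u') -hsz; apply/eq_in_map => j hj.
have : (j \in true_positions u) = (j \in true_positions u') by rewrite hT.
by rewrite !mem_filter -hsz hj !andbT.
Qed.

Lemma contains_word_permE u w : has_rise u ->
  contains (word_perm u) (word_perm w) = subseq u w.
Proof.
move=> hw; apply/idP/idP; last exact: subseq_contains_word_perm.
by case/contains_word_perm => m _ /(word_perm_inj hw) ->; exact: mask_subseq.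
Qed.

Lemma one_before_descent_word_perm u : has_rise u ->
  one_before_descent (word_perm u) = nth false u 0.
Proof.
move=> hw; have [h1 h2 _] := rise_blocks hw.
rewrite /one_before_descent first_descent_word_perm // /word_perm /split_by index_cat.
rewrite -/(true_positions u) -/(false_positions u).
have h1T : (1 \in true_positions u) = nth false u 0.
  by rewrite mem_filter mem_iota /letter /= (_ : 1 < 1 + size u) ?andbT //; lia.
rewrite h1T; case: (nth false u 0) h1T => h1T.
  by have := index_mem 1 (true_positions u); rewrite h1T size_true_positions; lia.
by apply/negbTE; rewrite size_true_positions; lia.
Qed.

Definition npairs (T : Type) (R : rel T) (s : seq T) : nat :=
  count (fun p => R p.1 p.2) (zip s (behead s)).

Lemma npairs_cons (T : Type) (R : rel T) x s :
  npairs R (x :: s) = (if s is y :: _ then R x y else false) + npairs R s.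
Proof. by case: s. Qed.

Lemma npairs_map (T U : Type) (R : rel U) (f : T -> U) s :
  npairs R (map f s) = npairs (fun x y => R (f x) (f y)) s.
Proof.
by elim: s => [//|x s IH]; rewrite /= npairs_cons IH npairs_cons; case: s {IH}.
Qed.

Lemma npairs_iota (R : rel nat) j k :
  npairs R (iota j k) = count (fun l => R l l.+1) (iota j k.-1).
Proof. by elim: k j => [//|k IH] j; rewrite /= npairs_cons IH; case: k {IH}. Qed.

Lemma npairs_cat (R : rel nat) a b : a != [::] -> b != [::] ->
  npairs R (a ++ b) = npairs R a + npairs R b + R (last 0 a) (head 0 b).
Proof.
elim: a => [//|x [|y a] IH] _ hb; rewrite cat_cons npairs_cons.
  by case: b hb {IH} => // z b _; rewrite /= addnC.
by rewrite IH // !npairs_cons !addnA.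
Qed.

Lemma adj_npairs s : adj s = npairs (fun x y => y == x.+1) s.
Proof.
rewrite /adj; elim: s => [//|x [//|y s] IH].
by rewrite npairs_cons -IH /= -(addn0 1) iotaDl count_map.
Qed.

Lemma npairs_filter_iota (P : pred nat) j k :
  npairs (fun x y => y == x.+1) (filter P (iota j k)) =
  count (fun l => P l && P l.+1) (iota j k.-1).
Proof.
elim: k j => [//|[|k] IH] j; first by rewrite /=; case: (P j).
have filter_cons x s : filter P (x :: s) = if P x then x :: filter P s else filter P s.
  by [].
have head_succ : (if filter P (iota j.+1 k.+1) is y :: _ then y == j.+1 else false)
                 = P j.+1.
  rewrite (_ : iota j.+1 k.+1 = j.+1 :: iota j.+2 k) // filter_cons.
  case: (P j.+1); first by rewrite eqxx.
  have : all (fun y => j.+1 < y) (filter P (iota j.+2 k)).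
    by apply/allP => y; rewrite mem_filter mem_iota; lia.
  by case: (filter P _) => [//|y s] /andP[hy _]; apply/eqP; lia.
rewrite (_ : iota j k.+2 = j :: iota j.+1 k.+1) // (_ : iota j k.+1 = j :: iota j.+1 k) //.
rewrite filter_cons [count _ (j :: _)]/= -IH; case: (P j) => //.
rewrite npairs_cons -head_succ.
by case: (filter P (iota j.+1 k.+1)).
Qed.

Lemma npairs_le (T : Type) (R : rel T) s : npairs R s <= (size s).-1.
Proof.
by rewrite /npairs (leq_trans (count_size _ _)) // size_zip size_behead geq_minr.
Qed.

Definition equal_neighbours (u : seq bool) : nat := npairs eq_op u.

Lemma equal_neighbours_cons c e u :
  equal_neighbours [:: c, e & u] = (c == e) + equal_neighbours (e :: u).
Proof. by []. Qed.

Lemma equal_neighbours_le u : equal_neighbours u <= (size u).-1.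
Proof. exact: npairs_le. Qed.

(* Adjacency pairs of [word_perm u] come from equal neighbouring letters of [u]:
   inside a block they are consecutive positions, and the junction is a descent. *)
Lemma adj_word_perm u : has_rise u -> adj (word_perm u) = equal_neighbours u.
Proof.
move=> hw; have [h1 h2 h3] := rise_blocks hw.
have hT : true_positions u != [::] by rewrite -size_eq0 size_true_positions -lt0n.
have hF : false_positions u != [::] by rewrite -size_eq0 size_false_positions; lia.
rewrite adj_npairs /word_perm /split_by -/(true_positions u) -/(false_positions u).
rewrite npairs_cat // (_ : (_ == _) = false); last by apply/negbTE; lia.
rewrite /true_positions /false_positions !npairs_filter_iota addn0.
rewrite /equal_neighbours -[u in RHS](map_letter u) npairs_map npairs_iota -count_predUI.
rewrite (@eq_count _ (predI _ _) pred0) ?count_pred0 ?addn0; last first.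
  by move=> l /=; case: (letter u l); case: (letter u l.+1).
by apply: eq_count => l /=; case: (letter u l); case: (letter u l.+1).
Qed.

Fixpoint bitseqs (n : nat) : seq (seq bool) :=
  if n is k.+1 then map (cons false) (bitseqs k) ++ map (cons true) (bitseqs k)
  else [:: [::]].

Lemma size_bitseqs n m : m \in bitseqs n -> size m = n.
Proof.
elim: n m => [|n IH] m /=; first by rewrite inE => /eqP ->.
by rewrite mem_cat => /orP[] /mapP[m' hm' ->] /=; rewrite IH.
Qed.

Definition alternating (A : seq bool) : bool := sorted (fun a b : bool => a != b) A.

Lemma alternating_cons c A :
  alternating (c :: A) -> alternating A /\ (A != [::] -> head false A = ~~ c).
Proof.
rewrite /alternating /=; case: A => [//|d A] /= /andP[hcd hA]; split => //.
by case: c d hcd {hA} => -[].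
Qed.

Definition strip_head (c : bool) (x : seq bool) : seq bool :=
  if x is y :: x' then (if y == c then x' else x) else [::].

Definition signed_supwords (x A : seq bool) : int :=
  (\sum_(m <- bitseqs (size A) | subseq x (mask m A)) (-1) ^+ (size A - count id m))%R.

Lemma signed_supwords_nil x : signed_supwords x [::] = (x == [::])%:R%R.
Proof. by rewrite /signed_supwords /= big_cons big_nil addr0; case: x. Qed.

Lemma signed_supwords_cons x c A :
  signed_supwords x (c :: A) =
  (- signed_supwords x A + signed_supwords (strip_head c x) A)%R.
Proof.
rewrite /signed_supwords /= big_cat !big_map /=; congr (_ + _)%R.
  rewrite -sumrN big_seq_cond [RHS]big_seq_cond; apply: eq_bigr => m /andP[hm _].
  have hc : count id m <= size A by rewrite -(size_bitseqs hm) count_size.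
  by rewrite subSn // exprS mulN1r.
apply: eq_big => [m|m _]; last by rewrite add1n subSS.
by case: x => [|y x] /=; rewrite ?sub0seq.
Qed.

(* The dual Moebius recursion on the subword intervals of an alternating word. *)
Lemma signed_supwords_alternating x A : alternating A ->
  signed_supwords x A = (x == A)%:R%R.
Proof.
elim: A x => [|c A IH] x; first by rewrite signed_supwords_nil.
case/alternating_cons => hA hhead; rewrite signed_supwords_cons !IH //.
case: x => [|y x] /=; first by rewrite addNr.
case: (y =P c) => [->|hyc]; last by rewrite addNr eqseq_cons; case: (y =P c).
rewrite eqseq_cons eqxx (_ : (c :: x == A) = false) ?oppr0 ?add0r //.
by apply/negbTE/eqP => hxA; move: hhead; rewrite -hxA /=; case: c {hxA} => /(_ isT).
Qed.

Definition embeddings (u A : seq bool) : nat :=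
  count (fun m => mask m A == u) (bitseqs (size A)).

Lemma embeddings_cons u c A : embeddings u (c :: A) =
  embeddings u A + (if u is d :: u' then (if d == c then embeddings u' A else 0) else 0).
Proof.
rewrite /embeddings /= count_cat !count_map; congr (_ + _).
case: u => [|d u] /=.
  by apply/eqP; rewrite -leqn0 leqNgt -has_count; apply/hasPn.
rewrite eq_sym; case: (c =P d) => [->|hcd].
  by apply: eq_count => m /=; rewrite eqseq_cons eqxx.
apply/eqP; rewrite -leqn0 leqNgt -has_count; apply/hasPn => m _ /=.
by rewrite eqseq_cons; case: (c =P d).
Qed.

Lemma embeddings_nil A : embeddings [::] A = 1.
Proof. by elim: A => [//|c A IH]; rewrite embeddings_cons IH addn0. Qed.

Lemma embeddings_alternating d u A : alternating A ->
  embeddings (d :: u) A =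
  'C((size A + (size u).+1 - equal_neighbours (d :: u) -
      (if d == nth false A 0 then 0 else 1))./2, (size u).+1).
Proof.
elim: A d u => [|c A IH] d u halt.
  by rewrite bin_small //=; have := equal_neighbours_le (d :: u); rewrite /=; lia.
have [hA hhead] := alternating_cons halt.
have hi := equal_neighbours_le (d :: u); rewrite [size _]/= in hi.
rewrite embeddings_cons [nth _ _ 0]/= [size (c :: A)]/=.
have [->|hA0] := eqVneq A [::].
  rewrite (_ : embeddings (d :: u) [::] = 0) // add0n.
  case: u hi => [|e u] hi; first by case: (d == c).
  by rewrite bin_small; [case: (d == c) | rewrite /= in hi *; lia].
have flip b : (b == nth false A 0) = (b != c).
  by move: hA0 (hhead hA0); case: A {IH halt hA hhead} => // f A' _ /= ->; case: b; case: c.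
rewrite IH // flip.
case: eqP => [edc|hdc] /=; last by rewrite addn0; congr 'C(_, _); lia.
subst d.
have hu : embeddings u A =
    'C((size A + (size u).+1 - equal_neighbours (c :: u) - 1)./2, size u).
  case: u hi {halt} => [|e u] hi; first by rewrite embeddings_nil bin0.
  rewrite IH // flip equal_neighbours_cons; congr 'C(_, _).
  have := equal_neighbours_le (e :: u); move: hi.
  rewrite equal_neighbours_cons [e == c]eq_sym [size (e :: u)]/=.
  by case: (c == e) => /=; lia.
rewrite hu -binS; congr 'C(_, _).
rewrite (_ : _ - 0 = (size A + (size u).+1 - equal_neighbours (c :: u) - 1).+2) //; lia.
Qed.

Section AlternatingInterval.

Variables (A u : seq bool).
Hypotheses (altA : alternating A) (rise_u : has_rise u) (uA : subseq u A).

Let I := perm_interval (word_perm u) (word_perm A).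

Lemma interval_word_perm z : z \in I -> exists2 v, z = word_perm v & subseq u v.
Proof.
rewrite mem_filter => /andP[/andP[huz hzA] _].
have [m _ hz] := contains_word_perm hzA.
by exists (mask m A); rewrite // -contains_word_permE // -hz.
Qed.

Lemma word_perm_in_interval v : subseq u v -> subseq v A -> word_perm v \in I.
Proof.
move=> huv hvA; rewrite mem_filter mem_perms_upto is_perm_word_perm !size_word_perm.
by rewrite (size_subseq hvA) !subseq_contains_word_perm.
Qed.

Definition signed_embeddings (z : seq nat) : int :=
  (\sum_(m <- bitseqs (size A) | word_perm (mask m A) == z) (-1) ^+ (size A - size z))%R.

Lemma signed_embeddings_bottom :
  signed_embeddings (word_perm u) = ((-1) ^+ (size A - size u) * (embeddings u A)%:Z)%R.
Proof.
rewrite /signed_embeddings big_const_seq iter_addr_0 size_word_perm -natz mulr_natr.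
congr (_ *+ _)%R; apply: eq_count => m /=.
by apply/eqP/eqP => [/esym/(word_perm_inj rise_u) | ->].
Qed.

Lemma signed_embeddings_sum x : x \in I ->
  (\sum_(z <- I | contains x z) signed_embeddings z = (x == word_perm A)%:R)%R.
Proof.
case/interval_word_perm => v -> huv.
have rise_v : has_rise v := subseq_trans rise_u huv.
have -> : (word_perm v == word_perm A) = (v == A).
  by apply/eqP/eqP => [/(word_perm_inj rise_v) | ->].
rewrite -(signed_supwords_alternating v altA) /signed_supwords /signed_embeddings.
rewrite big_mkcond (eq_bigr (fun z => \sum_(m <- bitseqs (size A))
    if contains (word_perm v) z && (word_perm (mask m A) == z)
    then (-1) ^+ (size A - size z) else 0)%R); last first.
  by move=> z _; case: ifP => _; rewrite /= ?big_mkcond // big1.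
rewrite exchange_big /= [RHS]big_mkcond big_seq [RHS]big_seq; apply: eq_bigr => m hm.
have hcontains : contains (word_perm v) (word_perm (mask m A)) = subseq v (mask m A).
  exact: contains_word_permE.
case hvm : (subseq v (mask m A)); last first.
  by apply: big1 => z _; case: eqP => [<-|_]; rewrite ?hcontains ?hvm ?andbF.
have hmI : word_perm (mask m A) \in I.
  exact: word_perm_in_interval (subseq_trans huv hvm) (mask_subseq m A).
rewrite (bigD1_seq _ hmI) ?uniq_perm_interval //= hcontains hvm eqxx /=.
rewrite size_word_perm size_mask ?(size_bitseqs hm) // big1 ?addr0 // => z hz.
by rewrite eq_sym (negbTE hz) andbF.
Qed.

Lemma mu_word_perm_alternating :
  mu (word_perm u) (word_perm A) = ((-1) ^+ (size A - size u) * (embeddings u A)%:Z)%R.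
Proof.
rewrite -signed_embeddings_bottom.
apply: (@recursions_agree _ _ I contains); first exact: uniq_perm_interval.
- exact: word_perm_in_interval (subseq_refl u) uA.
- exact: word_perm_in_interval uA (subseq_refl A).
- exact: mu_sum_interval.
- exact: signed_embeddings_sum.
Qed.

End AlternatingInterval.

Lemma word_perm_map_iota (p : pred nat) n :
  word_perm (map p (iota 1 n)) = split_by p (iota 1 n).
Proof.
rewrite /word_perm /split_by size_map size_iota.
have hletter : {in iota 1 n, letter (map p (iota 1 n)) =1 p}.
  move=> j; rewrite mem_iota => hj; rewrite /letter (nth_map 0) ?size_iota; last lia.
  by rewrite nth_iota; [congr p | ]; lia.
by congr (_ ++ _); apply: eq_in_filter => j /hletter /= ->.
Qed.

Lemma alternating_map_iota (p : pred nat) j k :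
  (forall x, p x.+1 = ~~ p x) -> alternating (map p (iota j k)).
Proof.
move=> hp; elim: k j => [//|[//|k] IH] j.
by have := IH j.+1; rewrite /alternating /= hp => ->; rewrite andbT; case: (p j).
Qed.

Lemma M_perm_word n : M_perm n = word_perm [seq ~~ odd j | j <- iota 1 n].
Proof.
rewrite word_perm_map_iota /split_by /M_perm; congr (_ ++ _).
by apply: eq_filter => x /=; rewrite negbK.
Qed.

Lemma W_perm_word n : W_perm n = word_perm [seq odd j | j <- iota 1 n].
Proof. by rewrite word_perm_map_iota. Qed.

Lemma M_W_alternating n pi : pi = M_perm n \/ pi = W_perm n ->
  exists2 A, pi = word_perm A & alternating A && (size A == n).
Proof.
case=> ->; [exists [seq ~~ odd j | j <- iota 1 n] | exists [seq odd j | j <- iota 1 n]];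
  rewrite ?M_perm_word ?W_perm_word // size_map size_iota eqxx andbT;
  by apply: alternating_map_iota => x; rewrite oddS.
Qed.

Unset Implicit Arguments.

Theorem mainTheorem12 (n m i : nat) (sigma pi : seq nat) :
  is_perm sigma -> size sigma = m -> des sigma = 1 -> adj sigma = i ->
  (pi = M_perm n \/ pi = W_perm n) -> des pi = 1 ->
  contains sigma pi ->
  mu sigma pi =
    ((-1) ^+ (n - m) *
     ('C((n + m - i - (if related sigma pi then 0%N else 1%N))./2, m))%:Z)%R.
Proof.
(* [is_perm sigma] and [des pi = 1] follow from the other hypotheses. *)
move=> _ hsize hdes hadj /M_W_alternating[A -> /andP[altA /eqP sizeA]] _ hc.
have [mk _ hsigma] := contains_word_perm hc.
have uA := mask_subseq mk A; move: (mask mk A) uA hsigma => u uA hsigma; subst sigma.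
have rise_u : has_rise u.
  by apply: contraT => /des_word_perm_no_rise; rewrite hdes.
have rise_A : has_rise A := subseq_trans rise_u uA.
rewrite mu_word_perm_alternating // -hsize size_word_perm sizeA.
rewrite /related !one_before_descent_word_perm // -hadj adj_word_perm //.
case: u rise_u {uA hsize hadj hdes hc} => [//|d u] _.
by rewrite embeddings_alternating // sizeA.
Qed.
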